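(* Let $(\tilde S,\tilde g)$ and $(\tilde T,\tilde f)$ be lifted partial permutations with $\tilde T=\tilde g(\tilde S)$. If $\mathrm{cr}(\tilde f\circ\tilde g)=\mathrm{cr}(\tilde f)+\mathrm{cr}(\tilde g)$, then $w_1(\tilde f\circ\tilde g)=w_1(\tilde f)+w_1(\tilde g)$ and $w_m(\tilde f\circ\tilde g)=w_m(\tilde f)+w_m(\tilde g)$.
   Context: Fix integers $0<k<m$. For $t\in\frac12\mathbb Z$ let $r_t(x)=2t-x$, and let $G_m$ be the group of isometries of $\mathbb R$ generated by $r_{1/2}$ and $r_{m-1/2}$; it acts on $\mathbb Z$ with $\mathbb Z/G_m\cong\{1,\dots,m-1\}$. A lifted partial permutation on $k$ letters is a pair $(\tilde S,\tilde f)$ with $\tilde S\subset\mathbb Z$ $G_m$-invariant, $|\tilde S/G_m|=k$, and $\tilde f:\tilde S\to\mathbb Z$ $G_m$-equivariant such that the induced map $\tilde S/G_m\to\mathbb Z/G_m$ is injective. Weight vector: $w_j(\tilde f)=\tfrac12\#\{i\in\tilde S: i<j-\tfrac12<\tilde f(i)\text{ or } i>j-\tfrac12>\tilde f(i)\}$ for $j=1,\dots,m$. A crossing of $\tilde f$ is a class $\langle i,j\rangle$ of pairs $i<j$ in $\tilde S$ with $\tilde f(i)>\tilde f(j)$, modulo $(i,j)\sim(i',j')$ iff $\{gi,gj\}=\{i',j'\}$ for some $g\in G_m$; $\mathrm{cr}(\tilde f)$ is the number of crossings. If $\tilde T=\tilde g(\tilde S)$ then $(\tilde S,\tilde f\circ\tilde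 g)$ is a lifted partial permutation. *)

From mathcomp Require Import all_boot all_order all_algebra.
From Stdlib Require Import ClassicalEpsilon.
Set Implicit Arguments. Unset Strict Implicit. Unset Printing Implicit Defensive.
Import Order.TTheory GRing.Theory Num.Theory.
Local Open Scope ring_scope.

(* Reflection r_t(x) = 2t - x, for t in (1/2)Z, parametrised by t2 = 2t. *)
Definition refl (t2 : int) (x : int) : int := t2 - x.

Definition r_half (x : int) : int := refl 1 x.
Definition r_mhalf (m : nat) (x : int) : int := refl (2 * m%:Z - 1) x.

(* An element of G_m given as a word in the generators (both are involutions,
   so these words give exactly the group generated by them). *)
Fixpoint Gact (m : nat) (w : seq bool) (x : int) : int :=
  match w with
  | [::] => x
  | b :: w' => (if b then r_half else r_mhalf m) (Gact m w' x)
  end.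

Definition Gorb (m : nat) (x y : int) : Prop := exists w, y = Gact m w x.

Definition class_enum {A : Type} (P : A -> Prop) (E : A -> A -> Prop)
  (s : seq A) : Prop :=
  (forall a, List.In a s -> P a) /\
  (forall a, P a -> exists2 b, List.In b s & E a b) /\
  (forall s1 a s2 b s3, s = s1 ++ a :: s2 ++ b :: s3 -> ~ E a b /\ ~ E b a).

(* number of E-classes of P (0 if there is no finite system of representatives) *)
Definition n_classes {A : Type} (P : A -> Prop) (E : A -> A -> Prop) : nat :=
  match excluded_middle_informative (exists s, class_enum P E s) with
  | left H => size (proj1_sig (constructive_indefinite_description _ H))
  | right _ => 0%N
  end.

(* cardinality of a finite subset (0 if infinite) *)
Definition fin_card {A : Type} (P : A -> Prop) : nat := n_classes P (@eq A).

(* (S, f) is a lifted partial permutation on k letters (f only matters on S) *)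
Definition lifted_pperm (m k : nat) (S : int -> Prop) (f : int -> int) : Prop :=
  [/\ (forall w x, S x -> S (Gact m w x)),
      n_classes S (Gorb m) = k,
      (forall w x, S x -> f (Gact m w x) = Gact m w (f x)) &
      (forall x y, S x -> S y -> Gorb m (f x) (f y) -> Gorb m x y)].

Definition weight (S : int -> Prop) (f : int -> int) (j : int) : rat :=
  let c : rat := j%:~R - 1 / 2 in
  (fin_card (fun i : int => S i /\
     ((i%:~R < c /\ c < (f i)%:~R) \/ (i%:~R > c /\ c > (f i)%:~R))))%:R / 2.

Definition crossing_pair (S : int -> Prop) (f : int -> int) (p : int * int) : Prop :=
  S p.1 /\ S p.2 /\ p.1 < p.2 /\ f p.1 > f p.2.

Definition pair_equiv (m : nat) (p q : int * int) : Prop :=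
  exists w, (Gact m w p.1 = q.1 /\ Gact m w p.2 = q.2) \/
            (Gact m w p.1 = q.2 /\ Gact m w p.2 = q.1).

Definition cr (m : nat) (S : int -> Prop) (f : int -> int) : nat :=
  n_classes (crossing_pair S f) (pair_equiv m).

From mathcomp Require Import all_boot all_order all_algebra.
From mathcomp Require Import zify lra.
From Stdlib Require Import ClassicalEpsilon Classical_Prop.
From Stdlib Require List.
Set Implicit Arguments. Unset Strict Implicit. Unset Printing Implicit Defensive.
Import Order.TTheory GRing.Theory Num.Theory.
Local Open Scope ring_scope.

(* Crossings of f o g are the ordered pairs of S inverted by exactly one of g
   and "f on the g-image", and g turns the latter bijectively into crossings of
   f.  Inclusion-exclusion on G_m-classes of pairs thus gives
     cr(f o g) + 2 #{classes of pairs inverted by both} = cr(f) + cr(g),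
   so the hypothesis rules out doubly inverted pairs.  In the same way a point
   crosses the level j - 1/2 under f o g iff it crosses it under exactly one of
   g and f, so w_j(f o g) = w_j(f) + w_j(g) unless some point is sent across the
   level by g and back by f.  For j = 1 and j = m the level is the axis of a
   generator of G_m, and such a point and its mirror image would form a doubly
   inverted pair. *)

Lemma In_cat (A : Type) (x : A) (s1 s2 : seq A) :
  List.In x (s1 ++ s2) <-> List.In x s1 \/ List.In x s2.
Proof. elim: s1 => [|a s1 IH] /=; first tauto. move: IH; tauto. Qed.

Lemma In_split (A : Type) (x : A) (s : seq A) :
  List.In x s -> exists s1 s2, s = s1 ++ x :: s2.
Proof.
elim: s => [|a s IH] //= [->|/IH [s1 [s2 ->]]]; first by exists [::], s.
by exists (a :: s1), s2.
Qed.
Arguments In_split {A x s}.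

Lemma In_map (A B : Type) (f : A -> B) (y : B) (s : seq A) :
  List.In y (map f s) <-> exists2 x, List.In x s & y = f x.
Proof.
elim: s => [|a s IH] /=; first by split => // -[].
split=> [[<-|Hy]|[x [<-|Hx] Ey]]; [by exists a; first left | | by left; rewrite Ey | ].
- by have [x Hx ->] := proj1 IH Hy; exists x; first right.
- by right; apply: (proj2 IH); exists x.
Qed.

Lemma In_mem (T : eqType) (x : T) (s : seq T) : x \in s -> List.In x s.
Proof. elim: s => //= a s IH; rewrite inE => /orP [/eqP ->|/IH]; auto. Qed.

Fixpoint class_uniq (A : Type) (E : A -> A -> Prop) (s : seq A) : Prop :=
  if s is a :: s' then (forall b, List.In b s' -> ~ E a b /\ ~ E b a) /\ class_uniq E s'
  else True.

Lemma class_uniqP (A : Type) (E : A -> A -> Prop) (s : seq A) :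
  class_uniq E s <->
  (forall s1 a s2 b s3, s = s1 ++ a :: s2 ++ b :: s3 -> ~ E a b /\ ~ E b a).
Proof.
elim: s => [|x s IH] /=.
  by split=> // _ [|? ?] ? ? ? ?.
split=> [[Hx /IH Hs] [|y s1] a s2 b s3 /= [Exa Es]|H].
- by rewrite -Exa; apply: Hx; rewrite Es; apply/In_cat; right; left.
- exact: (Hs s1 a s2 b s3 Es).
split=> [b /In_split [s2 [s3 Es]]|].
- by apply: (H [::] x s2 b s3); rewrite Es.
- by apply/IH => s1 a s2 b s3 Es; apply: (H (x :: s1) a s2 b s3); rewrite Es.
Qed.

Lemma class_uniq_cat (A : Type) (E : A -> A -> Prop) (s1 s2 : seq A) :
  class_uniq E s1 -> class_uniq E s2 ->
  (forall a b, List.In a s1 -> List.In b s2 -> ~ E a b /\ ~ E b a) ->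
  class_uniq E (s1 ++ s2).
Proof.
elim: s1 => [|a s1 IH] //= [H1 N1] N2 X; split.
- by move=> b /In_cat [Hb|Hb]; [exact: H1 | apply: X => //; left].
- by apply: IH => // a' b' Ha' Hb'; apply: X => //; right.
Qed.

Lemma class_uniq_map (A B : Type) (E : A -> A -> Prop) (E' : B -> B -> Prop)
    (phi : A -> B) (s : seq A) :
  class_uniq E s ->
  (forall a a', List.In a s -> List.In a' s -> E' (phi a) (phi a') -> E a a') ->
  class_uniq E' (map phi s).
Proof.
elim: s => [|a s IH] //= [Ha N] H; split.
- move=> b /In_map [x Hx ->]; split => HE.
  + by apply: (proj1 (Ha x Hx)); apply: H => //; [left|right].
  + by apply: (proj2 (Ha x Hx)); apply: H => //; [right|left].
- by apply: IH => // x y Hx Hy; apply: H; right.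
Qed.

Definition equiv_rel (A : Type) (E : A -> A -> Prop) : Prop :=
  [/\ forall a, E a a, forall a b, E a b -> E b a
    & forall a b c, E a b -> E b c -> E a c].

Definition fin_classes (A : Type) (P : A -> Prop) (E : A -> A -> Prop) : Prop :=
  exists s, class_enum P E s.

Definition saturated (A : Type) (E : A -> A -> Prop) (U X : A -> Prop) : Prop :=
  forall a b, X a -> U b -> E a b -> X b.

Section ClassCounting.
Variables (A : Type) (E : A -> A -> Prop).
Hypothesis E_equiv : equiv_rel E.

Let E_sym : forall a b, E a b -> E b a. Proof. by case: E_equiv. Qed.

Lemma saturated_and (U X Y : A -> Prop) :
  saturated E U X -> saturated E U Y -> saturated E U (fun a => X a /\ Y a).
Proof. by move=> hX hY a b [Xa Ya] Ub Eab; split; [apply: hX Eab | apply: hY Eab]. Qed.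

Lemma saturated_andN (U X Y : A -> Prop) : (forall a, X a -> U a) ->
  saturated E U X -> saturated E U Y -> saturated E U (fun a => X a /\ ~ Y a).
Proof.
move=> XU hX hY a b [Xa nYa] Ub Eab; split; first exact: hX Eab.
by move=> Yb; apply: nYa; apply: hY (E_sym Eab) => //; apply: XU.
Qed.

Lemma fin_classes_cover (P : A -> Prop) (L : seq A) :
  (forall a, P a -> exists2 b, List.In b L & P b /\ E a b) -> fin_classes P E.
Proof.
case: E_equiv => Er _ Et HL.
suff [s [H1 H2 H3]] : exists s, [/\ (forall a, List.In a s -> P a), class_uniq E s &
    forall b, List.In b L -> P b -> exists2 c, List.In c s & E b c].
  exists s; split=> //; split; last exact/class_uniqP.
  move=> a Pa; have [b Lb [Pb Eab]] := HL a Pa; have [c Hc Ebc] := H3 b Lb Pb.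
  by exists c => //; apply: Et Ebc.
elim: L {HL} => [|x L [s [H1 H2 H3]]]; first by exists [::].
have [[Px Hx]|Hn] := classic (P x /\ forall c, List.In c s -> ~ E x c).
- exists (x :: s); split => /=.
  + by move=> a [<-|/H1].
  + by split=> // b Hb; split=> [|/E_sym]; apply: Hx.
  + move=> b [<-|Hb] Pb; first by exists x; [left | apply: Er].
    by have [c Hc Ebc] := H3 b Hb Pb; exists c => //; right.
- exists s; split => // b [<-|Hb] Pb; last exact: H3.
  apply: NNPP => Hno; apply: Hn; split => // c Hc Exc; apply: Hno; by exists c.
Qed.

Lemma fin_classes_sub (U P X : A -> Prop) :
  fin_classes P E -> (forall a, X a -> P a) -> (forall a, P a -> U a) ->
  saturated E U X -> fin_classes X E.
Proof.
move=> [s [H1 [H2 _]]] XP PU HX; apply: (@fin_classes_cover _ s) => a Xa.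
have [b Hb Eab] := H2 a (XP a Xa).
by exists b => //; split=> //; apply: HX Eab => //; apply/PU/H1.
Qed.

Lemma size_class_uniq (s s' : seq A) :
  class_uniq E s -> (forall a, List.In a s -> exists2 b, List.In b s' & E a b) ->
  (size s <= size s')%N.
Proof.
case: E_equiv => _ _ Et; elim: s s' => [|a s IH] s' //= [Ha N] H.
have [b Hb Eab] := H a (or_introl erefl).
have [s1 [s2 Es']] := In_split Hb.
have -> : size s' = (size (s1 ++ s2)).+1 by rewrite Es' !size_cat /= addnS.
rewrite ltnS; apply: IH => // a' Ha'.
have [b' Hb' Eab'] := H a' (or_intror Ha').
move: Hb'; rewrite Es' => /In_cat [Hb'|/= [Hb'|Hb']].
- by exists b' => //; apply/In_cat; left.
- subst b'; case: (proj1 (Ha a' Ha')); exact: Et Eab (E_sym Eab').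
- by exists b' => //; apply/In_cat; right.
Qed.

Lemma n_classes_enum (P : A -> Prop) (s : seq A) :
  class_enum P E s -> n_classes P E = size s.
Proof.
move=> Hs; rewrite /n_classes.
case: excluded_middle_informative => [H|H]; last by case: H; exists s.
case: (constructive_indefinite_description _ H) => s' Hs' /=.
move: Hs Hs' => [H1 [H2 /class_uniqP H3]] [H1' [H2' /class_uniqP H3']].
apply/eqP; rewrite eqn_leq; apply/andP; split; apply: size_class_uniq => //.
- by move=> a /H1' /H2.
- by move=> a /H1 /H2'.
Qed.

Lemma n_classes_ext (P Q : A -> Prop) :
  (forall a, P a <-> Q a) -> n_classes P E = n_classes Q E.
Proof.
move=> PQ; have [[s Hs]|nP] := classic (fin_classes P E).
  have Hs' : class_enum Q E s.
    by case: Hs => [H1 [H2 H3]]; split; [|split] => // a; [move/H1/PQ | move/PQ/H2].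
  by rewrite (n_classes_enum Hs) (n_classes_enum Hs').
have nQ : ~ fin_classes Q E.
  move=> [s [H1 [H2 H3]]]; apply: nP; exists s.
  by split; [|split] => // a; [move/H1/PQ | move/PQ/H2].
rewrite /n_classes; case: excluded_middle_informative => [H|_]; first by case: nP.
by case: excluded_middle_informative => [H|_]; first by case: nQ.
Qed.

Lemma n_classes_empty (P : A -> Prop) : (forall a, ~ P a) -> n_classes P E = 0%N.
Proof.
move=> HP; apply: (@n_classes_enum _ [::]); split=> //; split=> [a /HP //|].
by case.
Qed.

Lemma n_classes_eq0 (P : A -> Prop) (a : A) :
  fin_classes P E -> n_classes P E = 0%N -> ~ P a.
Proof.
move=> [s Hs]; rewrite (n_classes_enum Hs) => /size0nil s0 Pa.
by have [b] := proj1 (proj2 Hs) a Pa; rewrite s0.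
Qed.

Lemma n_classes_union (X Y R : A -> Prop) :
  fin_classes X E -> fin_classes Y E ->
  (forall a b, X a -> Y b -> ~ E a b) -> (forall a, R a <-> X a \/ Y a) ->
  n_classes R E = (n_classes X E + n_classes Y E)%N.
Proof.
move=> [s1 h1] [s2 h2] D HR.
rewrite (n_classes_enum h1) (n_classes_enum h2) -size_cat.
move: h1 h2 => [X1 [X2 X3]] [Y1 [Y2 Y3]].
apply: n_classes_enum; split; [|split].
- by move=> a /In_cat [/X1|/Y1] ?; apply/HR; [left|right].
- move=> a /HR [/X2 [b ? ?]|/Y2 [b ? ?]]; exists b => //; apply/In_cat; by [left|right].
- apply/class_uniqP; apply: class_uniq_cat; try exact/class_uniqP.
  by move=> a b /X1 Xa /Y1 Yb; split=> [|/E_sym]; apply: D.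
Qed.

Lemma n_classes_xor (U P Q R : A -> Prop) :
  (forall a, P a -> U a) -> (forall a, Q a -> U a) ->
  saturated E U P -> saturated E U Q -> fin_classes P E -> fin_classes Q E ->
  (forall a, R a <-> U a /\ ~ (P a <-> Q a)) ->
  (n_classes R E + 2 * n_classes (fun a => P a /\ Q a) E
   = n_classes P E + n_classes Q E)%N.
Proof.
move=> PU QU satP satQ finP finQ HR.
have sep Z X Y : saturated E U Z -> (forall a, X a -> Z a) ->
    (forall b, Y b -> U b /\ ~ Z b) -> forall a b, X a -> Y b -> ~ E a b.
  move=> hZ XZ YZ a b Xa Yb Eab; have [Ub nZb] := YZ b Yb.
  by apply: nZb; apply: (hZ a) => //; apply: XZ.
have fin_PQ : fin_classes (fun a => P a /\ Q a) E.
  by apply: (fin_classes_sub (U := U) finP) => [a []|//|]; last exact: saturated_and.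
have fin_PnQ : fin_classes (fun a => P a /\ ~ Q a) E.
  by apply: (fin_classes_sub (U := U) finP) => [a []|//|]; last exact: saturated_andN.
have fin_QnP : fin_classes (fun a => Q a /\ ~ P a) E.
  by apply: (fin_classes_sub (U := U) finQ) => [a []|//|]; last exact: saturated_andN.
have nP : n_classes P E = (n_classes (fun a => P a /\ Q a) E
                           + n_classes (fun a => P a /\ ~ Q a) E)%N.
  apply: n_classes_union => //; last by move=> a; tauto.
  by apply: (sep Q) => [|a []|b [/PU]].
have nQ : n_classes Q E = (n_classes (fun a => P a /\ Q a) E
                           + n_classes (fun a => Q a /\ ~ P a) E)%N.
  apply: n_classes_union => //; last by move=> a; tauto.
  by apply: (sep P) => [|a []|b [/QU]].
have nR : n_classes R E = (n_classes (fun a => P a /\ ~ Q a) E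
                           + n_classes (fun a => Q a /\ ~ P a) E)%N.
  apply: n_classes_union => //; last by move=> a; move: (HR a) (PU a) (QU a); tauto.
  by apply: (sep P) => [|a []|b [/QU]].
by rewrite nP nQ nR; lia.
Qed.

End ClassCounting.

Lemma n_classes_map (A B : Type) (E : A -> A -> Prop) (E' : B -> B -> Prop)
    (P : A -> Prop) (P' : B -> Prop) (phi : A -> B) :
  equiv_rel E -> equiv_rel E' -> fin_classes P E ->
  (forall a, P a -> P' (phi a)) ->
  (forall a a', P a -> P a' -> E a a' <-> E' (phi a) (phi a')) ->
  (forall b, P' b -> exists2 a, P a & E' b (phi a)) ->
  n_classes P' E' = n_classes P E.
Proof.
move=> HE HE' [s [H1 [H2 H3]]] HP Hphi Hsurj.
have [_ _ Et'] := HE'.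
rewrite (n_classes_enum HE (conj H1 (conj H2 H3))) -(size_map phi).
apply: (n_classes_enum HE'); split; [|split].
- by move=> b /In_map [a /H1 /HP ? ->].
- move=> b /Hsurj [a Pa Eb]; have [c Hc Eac] := H2 a Pa.
  exists (phi c); first by apply/In_map; exists c.
  by apply: Et' Eb _; apply: (proj1 (Hphi _ _ Pa (H1 _ Hc))).
- apply/class_uniqP; apply: (@class_uniq_map _ _ E); first exact/class_uniqP.
  by move=> a a' /H1 Pa /H1 Pa'; apply: (proj2 (Hphi a a' Pa Pa')).
Qed.

Lemma r_halfE (x : int) : r_half x = 1 - x.
Proof. by []. Qed.

Lemma r_mhalfE (m : nat) (x : int) : r_mhalf m x = 2 * m%:Z - 1 - x.
Proof. by []. Qed.

Lemma Gact_cat (m : nat) (w1 w2 : seq bool) (x : int) :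
  Gact m (w1 ++ w2) x = Gact m w1 (Gact m w2 x).
Proof. by elim: w1 => //= b w1 ->. Qed.

Lemma Gact_affine (m : nat) (w : seq bool) :
  (exists a, forall x, Gact m w x = x + 2 * a) \/
  (exists a, forall x, Gact m w x = 2 * a + 1 - x).
Proof.
elim: w => [|b w [[a Ha]|[a Ha]]] /=.
- by left; exists 0 => x; rewrite mulr0 addr0.
- by case: b; right; [exists (- a) | exists (m%:Z - 1 - a)] => x;
    rewrite Ha ?r_halfE ?r_mhalfE; lia.
- by case: b; left; [exists (- a) | exists (m%:Z - 1 - a)] => x;
    rewrite Ha ?r_halfE ?r_mhalfE; lia.
Qed.

(* Both generators are involutions, so the reversed word acts as the inverse. *)
Lemma Gact_rev (m : nat) (w : seq bool) (x : int) : Gact m (rev w) (Gact m w x) = x.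
Proof.
elim: w x => //= b w IH x; rewrite rev_cons -cats1 Gact_cat /=.
have -> : forall y, (if b then r_half else r_mhalf m)
                      ((if b then r_half else r_mhalf m) y) = y.
  by move=> y; case: b; rewrite ?r_halfE ?r_mhalfE; lia.
exact: IH.
Qed.

Lemma Gact_period (m : nat) (z : int) :
  exists w, forall x, Gact m w x = x + z * (2 * m%:Z - 2).
Proof.
case: z => n.
- elim: n => [|n [w Hw]]; first by exists [::] => x /=; lia.
  by exists ([:: false; true] ++ w) => x; rewrite Gact_cat /= r_halfE r_mhalfE Hw; lia.
- rewrite NegzE; elim: n => [|n [w Hw]].
    by exists [:: true; false] => x /=; rewrite r_halfE r_mhalfE; lia.
  by exists ([:: true; false] ++ w) => x; rewrite Gact_cat /= r_halfE r_mhalfE Hw; lia.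
Qed.

Lemma Gact_window (m : nat) (x : int) : (1 < m)%N ->
  exists w c, (forall y, Gact m w y = y + c) /\ 0 <= x + c < 2 * m%:Z - 2.
Proof.
move=> m1; set P := 2 * m%:Z - 2.
have P0 : P != 0 by rewrite /P; lia.
have [w Hw] := Gact_period m (- (x %/ P)%Z).
exists w, (- (x %/ P)%Z * P); split => //.
have -> : x + - (x %/ P)%Z * P = (x %% P)%Z by rewrite {1}(divz_eq x P); lia.
by rewrite modz_ge0 //= ltz_pmod //; lia.
Qed.

Lemma pair_equiv_equiv (m : nat) : equiv_rel (pair_equiv m).
Proof.
split.
- by move=> p; exists [::]; left.
- move=> p q [w [[H1 H2]|[H1 H2]]]; exists (rev w); [left|right];
    by rewrite -?H1 -?H2 !Gact_rev.
- move=> p q r [w1 [[H1 H2]|[H1 H2]]] [w2 [[K1 K2]|[K1 K2]]]; exists (w2 ++ w1);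
    rewrite !Gact_cat ?H1 ?H2 ?K1 ?K2; by [left|right].
Qed.

(* A lifted partial permutation moves every point by a bounded amount: the
   displacement is constant up to sign on G_m-orbits, of which there are k. *)
Lemma pperm_displacement (m k : nat) (S : int -> Prop) (g : int -> int) :
  (0 < k)%N -> lifted_pperm m k S g ->
  exists D, forall x, S x -> g x - x <= D /\ x - g x <= D.
Proof.
move=> k0 [_ Ncl Geq _].
have [s [Hs1 [Hs _]]] : fin_classes S (Gorb m).
  move: Ncl; rewrite /n_classes; case: excluded_middle_informative => // _ Hk.
  by rewrite -Hk in k0.
have [D HD] : exists D, forall b, List.In b s -> g b - b <= D /\ b - g b <= D.
  elim: s {Hs Hs1} => [|b s [D HD]]; first by exists 0.
  by exists (`|D| + `|g b - b|) => b' /= [<-|/HD]; lia.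
exists D => x Sx; have [b Hb [w Ebx]] := Hs x Sx.
have -> : x = Gact m (rev w) b by rewrite Ebx Gact_rev.
have := HD b Hb; rewrite Geq; last exact: Hs1.
by case: (Gact_affine m (rev w)) => -[a Ha]; rewrite !Ha; lia.
Qed.

Lemma pperm_inj (m k : nat) (S : int -> Prop) (g : int -> int) :
  lifted_pperm m k S g -> forall x y, S x -> S y -> g x = g y -> x = y.
Proof.
move=> [_ _ Geq Ginj] x y Sx Sy Exy.
have [w Hw] : Gorb m x y by apply: Ginj => //; exists [::]; rewrite Exy.
have := Geq w x Sx; rewrite -Hw -Exy.
by case: (Gact_affine m w) => -[a Ha]; rewrite Hw !Ha; lia.
Qed.

Definition inverts (h : int -> int) (x y : int) : Prop :=
  (x < y /\ h y < h x) \/ (y < x /\ h x < h y).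

Definition ordered_pair (S : int -> Prop) (p : int * int) : Prop :=
  S p.1 /\ S p.2 /\ p.1 < p.2.

Lemma crossing_pairE (S : int -> Prop) (h : int -> int) (p : int * int) :
  crossing_pair S h p <-> ordered_pair S p /\ inverts h p.1 p.2.
Proof.
rewrite /crossing_pair /ordered_pair /inverts.
split=> [[S1 [S2 [l c]]]|[[S1 [S2 l]] H]]; first by do !split => //; left.
by do !split => //; case: H; lia.
Qed.

(* Inversions of a G_m-equivariant map are G_m-invariant, since G_m acts by
   order-preserving or order-reversing affine maps. *)
Lemma inverts_Gact (m : nat) (S : int -> Prop) (h : int -> int) :
  (forall w x, S x -> h (Gact m w x) = Gact m w (h x)) ->
  forall w x y, S x -> S y -> inverts h x y -> inverts h (Gact m w x) (Gact m w y).
Proof.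
move=> Heq w x y Sx Sy; rewrite /inverts !Heq //.
by case: (Gact_affine m w) => -[a Ha]; rewrite !Ha; lia.
Qed.

Lemma pairs_saturated (m : nat) (S : int -> Prop) (P : int -> int -> Prop) :
  (forall x y, P x y -> P y x) ->
  (forall w x y, S x -> S y -> P x y -> P (Gact m w x) (Gact m w y)) ->
  saturated (pair_equiv m) (ordered_pair S) (fun p => ordered_pair S p /\ P p.1 p.2).
Proof.
move=> Psym Pinv [a1 a2] [b1 b2] [[/= S1 [S2 _]] Pa] Ub [w /= Hw]; split=> //=.
by case: Hw => -[<- <-]; [|apply: Psym]; apply: Pinv.
Qed.

(* A saturated set of ordered pairs of bounded width meets only finitely many
   G_m-classes: each pair can be translated into a fixed finite box. *)
Lemma pairs_fin_classes (m : nat) (S : int -> Prop) (X : int * int -> Prop) (N : int) :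
  (1 < m)%N -> (forall w x, S x -> S (Gact m w x)) ->
  (forall p, X p -> ordered_pair S p /\ p.2 - p.1 <= N) ->
  saturated (pair_equiv m) (ordered_pair S) X -> fin_classes X (pair_equiv m).
Proof.
move=> m1 Sinv HB HX.
apply: (@fin_classes_cover _ _ (pair_equiv_equiv m) _
  [seq (x%:Z, y%:Z) | x <- iota 0 (2 * m), y <- iota 0 (2 * m + absz N)]).
move=> [i j] Xp; have [w [c [Hw Hc]]] := @Gact_window m i m1.
have [[/= Si [Sj lij]] dij] := HB _ Xp.
have Ep : pair_equiv m (i, j) (i + c, j + c) by exists w; left; rewrite !Hw.
exists (i + c, j + c).
  apply: In_mem; apply/allpairsP; exists (absz (i + c), absz (j + c)).
  by rewrite /= !mem_iota; split; [lia | lia | congr pair; lia].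
split=> //; apply: HX Ep => //; rewrite /ordered_pair /= -!Hw.
by split; [exact: Sinv | split; [exact: Sinv | rewrite !Hw; lia]].
Qed.

(* i and h i lie on opposite sides of the level j - 1/2. *)
Definition level_crossing (h : int -> int) (j i : int) : Prop :=
  (i < j /\ j <= h i) \/ (j <= i /\ h i < j).

Lemma lt_level (a j : int) : ((a%:~R : rat) < j%:~R - 1 / 2) <-> (a < j).
Proof.
split=> H.
- rewrite ltNge; apply/negP => Hja; move: H.
  have : (j%:~R : rat) <= a%:~R by rewrite ler_int.
  lra.
- have : (a%:~R : rat) <= (j - 1)%:~R by rewrite ler_int; lia.
  rewrite intrB; lra.
Qed.

Lemma level_lt (a j : int) : ((j%:~R - 1 / 2 : rat) < a%:~R) <-> (j <= a).
Proof.
split=> H.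
- rewrite leNgt; apply/negP => Hja; move: H.
  have : (a%:~R : rat) <= (j - 1)%:~R by rewrite ler_int; lia.
  rewrite intrB; lra.
- have : (j%:~R : rat) <= a%:~R by rewrite ler_int.
  lra.
Qed.

Lemma int_fin_classes (X : int -> Prop) (lo hi : int) :
  (forall x, X x -> lo <= x <= hi) -> fin_classes X eq.
Proof.
move=> HB; apply: (@fin_classes_cover _ _ _ _
  [seq lo + i%:Z | i <- iota 0 (absz (hi - lo)).+1]); first by split=> //; congruence.
move=> x Xx; have Bx := HB x Xx; exists x => //.
apply: In_mem; apply/mapP; exists (absz (x - lo)); last lia.
by rewrite mem_iota; lia.
Qed.

Lemma eq_equiv (A : Type) : equiv_rel (@eq A).
Proof. by split=> //; congruence. Qed.

Lemma weightE (S : int -> Prop) (h : int -> int) (j : int) :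
  weight S h j = (fin_card (fun i => S i /\ level_crossing h j i))%:R / 2.
Proof.
rewrite /weight /fin_card; congr (_%:R / 2).
apply: (n_classes_ext (eq_equiv int)) => i /=.
have := lt_level i j; have := level_lt i j.
have := lt_level (h i) j; have := level_lt (h i) j.
rewrite /level_crossing; tauto.
Qed.

Lemma level_crossing_comp (g f : int -> int) (j i : int) :
  level_crossing (f \o g) j i <-> ~ (level_crossing g j i <-> level_crossing f j (g i)).
Proof. by rewrite /level_crossing /=; lia. Qed.

Lemma pair_swap (m : nat) (x y : int) : pair_equiv m (x, y) (y, x).
Proof. by exists [::]; right. Qed.

Section Composition.
Variables (m k : nat) (S T : int -> Prop) (g f : int -> int).
Hypotheses (Hg : lifted_pperm m k S g) (Hf : lifted_pperm m k T f).
Hypothesis T_img : forall y, T y <-> exists2 x, S x & y = g x.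

Let S_img x : S x -> T (g x).
Proof. by move=> Sx; apply/T_img; exists x. Qed.

Lemma image_inverts_Gact (w : seq bool) (x y : int) : S x -> S y ->
  inverts f (g x) (g y) -> inverts f (g (Gact m w x)) (g (Gact m w y)).
Proof.
move=> Sx Sy; have [_ _ Geq _] := Hg; have [_ _ Feq _] := Hf.
by rewrite !Geq //; apply: (inverts_Gact Feq); apply: S_img.
Qed.

Lemma g_inversions_saturated : saturated (pair_equiv m) (ordered_pair S)
  (fun p => ordered_pair S p /\ inverts g p.1 p.2).
Proof.
have [_ _ Geq _] := Hg.
apply: (pairs_saturated (P := inverts g)) => [x y|]; last exact: inverts_Gact Geq.
by rewrite /inverts; lia.
Qed.

Lemma f_inversions_saturated : saturated (pair_equiv m) (ordered_pair S)
  (fun p => ordered_pair S p /\ inverts f (g p.1) (g p.2)).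
Proof.
apply: (pairs_saturated (P := fun x y => inverts f (g x) (g y))) => [x y|].
  by rewrite /inverts; lia.
exact: image_inverts_Gact.
Qed.

Lemma pair_equiv_image (a a' : int * int) :
  S a.1 -> S a.2 -> S a'.1 -> S a'.2 ->
  pair_equiv m a a' <-> pair_equiv m (g a.1, g a.2) (g a'.1, g a'.2).
Proof.
have [Sinv _ Geq _] := Hg; have ginj := pperm_inj Hg.
move=> S1 S2 S1' S2'; split=> [] [w Hw]; exists w; rewrite /= in Hw *.
- by rewrite -!Geq //; case: Hw => -[<- <-]; [left | right].
- rewrite -!Geq // in Hw.
  by case: Hw => -[H1 H2]; [left | right]; split; apply: ginj => //; apply: Sinv.
Qed.

(* As g and f are injective, f o g inverts a pair exactly when one, but not
   both, of g and f (on the image) does. *)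
Lemma inverts_comp (x y : int) : S x -> S y -> x <> y ->
  inverts (f \o g) x y <-> ~ (inverts g x y <-> inverts f (g x) (g y)).
Proof.
move=> Sx Sy nxy.
have gxy : g x <> g y by move=> E; apply: nxy; apply: (pperm_inj Hg).
have fxy : f (g x) <> f (g y).
  by move=> E; apply: gxy; apply: (pperm_inj Hf) => //; apply: S_img.
by rewrite /inverts /=; lia.
Qed.

(* If j - 1/2 is the axis of a reflection in G_m, a point of S sent across the
   level by g and back by f would yield, together with its mirror image, a pair
   inverted both by g and by f. *)
Lemma no_bounce (j : int) (w : seq bool) :
  (forall x y, S x -> S y -> x < y -> ~ (inverts g x y /\ inverts f (g x) (g y))) ->
  (forall x, Gact m w x = 2 * j - 1 - x) ->
  forall i, S i -> ~ (level_crossing g j i /\ level_crossing f j (g i)).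
Proof.
move=> nodbl Hw i Si [Cg Cf].
have [Sinv _ Geq _] := Hg; have [_ _ Feq _] := Hf.
have Sr := Sinv w i Si; have Eg := Geq w i Si; have Ef := Feq w (g i) (S_img Si).
rewrite !Hw in Sr Eg Ef; rewrite /level_crossing in Cg Cf.
case: Cg => Cg.
- by apply: (nodbl i (2 * j - 1 - i)) => //; [lia | rewrite /inverts Eg Ef; lia].
- by apply: (nodbl (2 * j - 1 - i) i) => //; [lia | rewrite /inverts Eg Ef; lia].
Qed.

(* Finiteness of the relevant classes of pairs needs k > 0 (for displacement
   bounds) and m > 1 (so that G_m has a nonzero period). *)
Section Finiteness.
Hypotheses (k_gt0 : (0 < k)%N) (m_gt1 : (1 < m)%N).

(* A pair inverted by a lifted partial permutation has width at most twice its
   displacement bound, so both kinds of inverted pairs have finitely many classes. *)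
Lemma g_inversions_fin :
  fin_classes (fun p => ordered_pair S p /\ inverts g p.1 p.2) (pair_equiv m).
Proof.
have [Sinv _ _ _] := Hg; have [D HD] := pperm_displacement k_gt0 Hg.
apply: (pairs_fin_classes (N := 2 * D)) g_inversions_saturated => //.
move=> [x y] [[/= Sx [Sy l]] c]; split; first by do !split.
by have := HD x Sx; have := HD y Sy; rewrite /inverts in c; lia.
Qed.

Lemma f_inversions_fin :
  fin_classes (fun p => ordered_pair S p /\ inverts f (g p.1) (g p.2)) (pair_equiv m).
Proof.
have [Sinv _ _ _] := Hg.
have [Dg HDg] := pperm_displacement k_gt0 Hg; have [Df HDf] := pperm_displacement k_gt0 Hf.
apply: (pairs_fin_classes (N := 2 * Dg + 2 * Df)) f_inversions_saturated => //.
move=> [x y] [[/= Sx [Sy l]] c]; split; first by do !split.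
have := HDg x Sx; have := HDg y Sy; have := HDf _ (S_img Sx); have := HDf _ (S_img Sy).
by rewrite /inverts in c; lia.
Qed.

Lemma cr_image : cr m T f =
  n_classes (fun p => ordered_pair S p /\ inverts f (g p.1) (g p.2)) (pair_equiv m).
Proof.
have EE := pair_equiv_equiv m; have [Erefl Esym Etr] := EE.
pose phi p := if g p.1 < g p.2 then (g p.1, g p.2) else (g p.2, g p.1).
have phiE p : pair_equiv m (phi p) (g p.1, g p.2).
  by rewrite /phi; case: ifP => _; [apply: Erefl | apply: pair_swap].
have ginj := pperm_inj Hg.
apply: (n_classes_map EE EE f_inversions_fin (phi := phi)).
- move=> [x y] [[/= Sx [Sy l]] c]; apply/crossing_pairE.
  have gxy : g x <> g y by move=> E; have := ginj x y Sx Sy E; lia.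
  have Tx := S_img Sx; have Ty := S_img Sy.
  rewrite /phi /ordered_pair /inverts /= in c *.
  by case: ifP => h /=; do !split => //; lia.
- move=> a a' [[S1 [S2 _]] _] [[S1' [S2' _]] _]; rewrite pair_equiv_image //.
  split=> E.
  + exact: Etr _ _ _ (phiE a) (Etr _ _ _ E (Esym _ _ (phiE a'))).
  + exact: Etr _ _ _ (Esym _ _ (phiE a)) (Etr _ _ _ E (phiE a')).
- move=> [u v] /crossing_pairE [[/= Tu [Tv l]] c]; rewrite /inverts /= in c.
  have [x Sx Ex] := proj1 (T_img u) Tu; have [y Sy Ey] := proj1 (T_img v) Tv.
  have nxy : x <> y by move=> E; rewrite Ex Ey E in l; lia.
  have [hxy|hxy] := ltrP x y.
  + exists (x, y); first by split; [do !split | rewrite /inverts /= -Ex -Ey; lia].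
    by rewrite /phi /= -Ex -Ey l; apply: Erefl.
  + exists (y, x).
      by split; [do !split => //=; lia | rewrite /inverts /= -Ex -Ey; lia].
    by rewrite /phi /= -Ex -Ey ifN; [apply: Erefl | lia].
Qed.

Lemma no_double_inversion :
  cr m S (f \o g) = (cr m T f + cr m S g)%N ->
  forall x y, S x -> S y -> x < y -> ~ (inverts g x y /\ inverts f (g x) (g y)).
Proof.
move=> Hcr x y Sx Sy lxy [Gxy Fxy].
have EE := pair_equiv_equiv m.
pose U := ordered_pair S.
pose P p := U p /\ inverts g p.1 p.2.
pose Q p := U p /\ inverts f (g p.1) (g p.2).
have xor : (cr m S (f \o g) + 2 * n_classes (fun p => P p /\ Q p) (pair_equiv m)
            = n_classes P (pair_equiv m) + n_classes Q (pair_equiv m))%N.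
  apply: (n_classes_xor EE (U := U) (P := P) (Q := Q)
           (fun p => @proj1 _ _) (fun p => @proj1 _ _) g_inversions_saturated
           f_inversions_saturated g_inversions_fin f_inversions_fin) => -[a b].
  have := crossing_pairE S (f \o g) (a, b).
  case: (classic (U (a, b))) => Uab; last by rewrite /P /Q; tauto.
  have [/= Sa [Sb lab]] := Uab.
  have nab : a <> b by lia.
  have := inverts_comp Sa Sb nab.
  rewrite /P /Q /=; tauto.
have crg : cr m S g = n_classes P (pair_equiv m) := n_classes_ext EE (crossing_pairE S g).
have crf : cr m T f = n_classes Q (pair_equiv m) := cr_image.
have fin_PQ : fin_classes (fun p => P p /\ Q p) (pair_equiv m).
  apply: (fin_classes_sub EE (U := U) g_inversions_fin) => [p []|p []|] //.
  exact: saturated_and g_inversions_saturated f_inversions_saturated.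
apply: (n_classes_eq0 EE fin_PQ (a := (x, y))); first lia.
by split; split=> //; split.
Qed.

End Finiteness.

Lemma level_crossings_image (j : int) :
  fin_classes (fun i => S i /\ level_crossing f j (g i)) eq ->
  fin_card (fun y => T y /\ level_crossing f j y)
  = n_classes (fun i => S i /\ level_crossing f j (g i)) eq.
Proof.
move=> finQ; apply: (n_classes_map (eq_equiv int) (eq_equiv int) finQ (phi := g)).
- by move=> i [Si C]; split=> //; apply: S_img.
- by move=> a a' [Sa _] [Sa' _]; split=> [->|]; last exact: (pperm_inj Hg).
- move=> y [Ty C]; have [x Sx Ey] := proj1 (T_img y) Ty.
  by exists x => //; split=> //; rewrite -Ey.
Qed.

Lemma weight_comp (j : int) : (0 < k)%N ->
  (forall i, S i -> ~ (level_crossing g j i /\ level_crossing f j (g i))) ->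
  weight S (f \o g) j = weight T f j + weight S g j.
Proof.
move=> k_gt0 nobounce; rewrite !weightE.
have [Dg HDg] := pperm_displacement k_gt0 Hg; have [Df HDf] := pperm_displacement k_gt0 Hf.
pose P i := S i /\ level_crossing g j i.
pose Q i := S i /\ level_crossing f j (g i).
have finP : fin_classes P eq.
  apply: (int_fin_classes (lo := j - Dg) (hi := j + Dg)) => i [Si C].
  by have := HDg i Si; rewrite /level_crossing in C; lia.
have finQ : fin_classes Q eq.
  apply: (int_fin_classes (lo := j - Dg - Df) (hi := j + Dg + Df)) => i [Si C].
  by have := HDg i Si; have := HDf _ (S_img Si); rewrite /level_crossing in C; lia.
have sat X : saturated eq S X by move=> a b Xa _ <-.
have Riff i : S i /\ level_crossing (f \o g) j i <-> S i /\ ~ (P i <-> Q i).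
  by have := level_crossing_comp g f j i; rewrite /P /Q; tauto.
have xor := n_classes_xor (eq_equiv int) (U := S) (P := P) (Q := Q)
  (fun i => @proj1 _ _) (fun i => @proj1 _ _) (sat P) (sat Q) finP finQ Riff.
have no_PQ : n_classes (fun i => P i /\ Q i) eq = 0%N.
  apply: (n_classes_empty (eq_equiv int)) => i [[Si Cg] [_ Cf]].
  exact: (nobounce i Si).
have nR : n_classes (fun i => S i /\ level_crossing (f \o g) j i) eq
          = (n_classes P eq + n_classes Q eq)%N by rewrite -xor no_PQ muln0 addn0.
by rewrite level_crossings_image // /fin_card nR natrD mulrDl addrC.
Qed.

End Composition.

Theorem mainTheorem2 (m k : nat) (S T : int -> Prop) (g f : int -> int) :
  (0 < k)%N -> (k < m)%N ->
  lifted_pperm m k S g ->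
  lifted_pperm m k T f ->
  (forall y, T y <-> exists2 x, S x & y = g x) ->
  cr m S (f \o g) = (cr m T f + cr m S g)%N ->
  weight S (f \o g) 1 = weight T f 1 + weight S g 1 /\
  weight S (f \o g) m%:Z = weight T f m%:Z + weight S g m%:Z.
Proof.
move=> k_gt0 k_lt_m Hg Hf T_img Hcr.
have m_gt1 : (1 < m)%N by lia.
have nodbl := no_double_inversion Hg Hf T_img k_gt0 m_gt1 Hcr.
(* r_{1/2} and r_{m-1/2} are the reflections about the levels 1 - 1/2 and m - 1/2. *)
split; apply: (weight_comp Hg Hf T_img k_gt0).
- by apply: (no_bounce Hg Hf T_img (w := [:: true]) nodbl) => x; rewrite /= r_halfE; lia.
- by apply: (no_bounce Hg Hf T_img (w := [:: false]) nodbl) => x; rewrite /= r_mhalfE; lia.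
Qed.
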